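(* Let $A\in\mathbb{R}^{n\times n}$ be symmetric, $Z\in\mathbb{R}^{n\times k}$, $\alpha\in\{+1,-1\}$, $\beta\in\{+1,-1\}$, and suppose that both $A$ and $A+\alpha ZZ^{T}$ are positive definite. Let $V\in\mathbb{R}^{n\times k}$ be defined by $V=Z$ if $\beta=1$ and $V=A^{-1}Z(I_k+\alpha Z^{T}A^{-1}Z)^{-1/2}$ if $\beta=-1$. Consider the matrix equation in $C\in\mathbb{R}^{n\times n}$ \[ A^{\beta/2}C+CA^{\beta/2}+\alpha\beta C^{2}=VV^{T}. \quad (\ast) \] Then $C=\alpha\beta\left((A+\alpha ZZ^{T})^{\beta/2}-A^{\beta/2}\right)$ is a solution of $(\ast)$. Conversely, if $C$ is a positive definite solution of $(\ast)$ for which $A^{\beta/2}+\alpha\beta C$ is positive definite as well, then $A^{\beta/2}+\alpha\beta C=(A+\alpha ZZ^{T})^{\beta/2}$.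
   Context: For a symmetric positive definite matrix $M$, $M^{1/2}$ is its principal square root and $M^{-1/2}=(M^{1/2})^{-1}$; $M^{\beta/2}$ is interpreted accordingly for $\beta=\pm1$. With this choice of $V$ one has $(A+\alpha ZZ^{T})^{\beta}=A^{\beta}+\alpha\beta VV^{T}$. *)

From HB Require Import structures.
From mathcomp Require Import all_boot all_order all_algebra.
Set Implicit Arguments. Unset Strict Implicit. Unset Printing Implicit Defensive.
Import Order.TTheory GRing.Theory Num.Theory.
Local Open Scope ring_scope.

Definition posdef (R : realFieldType) (n : nat) (M : 'M[R]_n) : Prop :=
  M^T = M /\ forall x : 'cV[R]_n, x != 0 -> 0 < (x^T *m M *m x) 0 0.

Definition is_psqrt (R : realFieldType) (n : nat) (M S : 'M[R]_n) : Prop :=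
  posdef S /\ S *m S = M.

(* M^{beta/2} given the principal square root S = M^{1/2}, for beta = +-1:
   M^{1/2} = S and M^{-1/2} = S^{-1}. *)
Definition halfpow (R : realFieldType) (n : nat) (beta : R) (S : 'M[R]_n) : 'M[R]_n :=
  if beta == 1 then S else invmx S.

(* With X := A^{β/2}, Y := (A + αZZ^T)^{β/2} and g := αβ, so that g² = 1, every C satisfies
   (X + gC)² = X² + g (XC + CX + gC²).  Hence, as soon as g (Y² − X²) = VV^T, equation (∗)
   says exactly (X + gC)² = Y²: the choice X + gC = Y solves it, and conversely X + gC = Y
   by uniqueness of positive definite square roots.  The identity g (Y² − X²) = VV^T is
   immediate for β = 1 and is the Sherman–Morrison–Woodbury formula for β = −1. *)

From mathcomp Require Import all_boot all_order all_algebra.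
From mathcomp Require Import lra.
Set Implicit Arguments. Unset Strict Implicit. Unset Printing Implicit Defensive.
Import Order.TTheory GRing.Theory Num.Theory.
Local Open Scope ring_scope.

Section MatrixInverse.
Variable R : comUnitRingType.

Lemma mulmx1_invmx n (M W : 'M[R]_n) : M *m W = 1%:M -> invmx M = W.
Proof.
move=> MW; have [uM _] := mulmx1_unit MW.
by rewrite -[W](mulKmx uM) MW mulmx1.
Qed.

Lemma invmxM n (M N : 'M[R]_n) : M \in unitmx -> N \in unitmx ->
  invmx (M *m N) = invmx N *m invmx M.
Proof.
move=> uM uN; apply: mulmx1_invmx.
by rewrite -mulmxA (mulmxA N) mulmxV // mul1mx mulmxV.
Qed.

Lemma woodbury n k (A : 'M[R]_n) (Z : 'M[R]_(n, k)) a :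
  let K := 1%:M + a *: (Z^T *m invmx A *m Z) in
  A \in unitmx -> K \in unitmx ->
  invmx (A + a *: (Z *m Z^T)) =
    invmx A - a *: (invmx A *m Z *m invmx K *m Z^T *m invmx A).
Proof.
move=> K uA uK; apply: mulmx1_invmx.
have AZ_K : (A + a *: (Z *m Z^T)) *m invmx A *m Z = Z *m K.
  rewrite mulmxDl mulmxV // -scalemxAl mulmxDl mul1mx /K mulmxDr mulmx1.
  by rewrite -!scalemxAl -!scalemxAr !mulmxA.
rewrite mulmxBr -scalemxAr !mulmxA AZ_K mulmxK //.
by rewrite mulmxDl mulmxV // -scalemxAl addrK.
Qed.

End MatrixInverse.

Section Riccati.
Variables (R : comPzRingType) (n : nat).
Implicit Types (g : R) (X Y C : 'M[R]_n).

Definition riccati g X C := X *m C + C *m X + g *: (C *m C).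

Lemma riccati_sqr g X C : g * g = 1 ->
  (X + g *: C) *m (X + g *: C) = X *m X + g *: riccati g X C.
Proof.
move=> gg; rewrite /riccati mulmxDl !mulmxDr -!scalemxAl -!scalemxAr scalerA gg scale1r.
by rewrite !scalerDr scalerA gg scale1r !addrA [X *m X + _ + _]addrAC.
Qed.

Lemma riccati_sub g X Y : g * g = 1 ->
  riccati g X (g *: (Y - X)) = g *: (Y *m Y - X *m X).
Proof.
move=> gg; have XY : X + g *: (g *: (Y - X)) = Y by rewrite scalerA gg scale1r addrC subrK.
rewrite -[LHS]scale1r -gg -scalerA; congr (_ *: _).
by apply: (@addrI _ (X *m X)); rewrite -riccati_sqr // XY addrC subrK.
Qed.

End Riccati.

Section PositiveDefinite.
Variable R : realFieldType.

Lemma posdef_unitmx n (M : 'M[R]_n) : posdef M -> M \in unitmx.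
Proof.
move=> [_ Mp]; rewrite unitmxE unitfE; apply/negP => /det0P [v v0 vM].
have := Mp v^T; rewrite trmx_eq0 => /(_ v0).
by rewrite trmxK vM mul0mx mxE ltxx.
Qed.

Lemma posdef_inv n (M : 'M[R]_n) : posdef M -> posdef (invmx M).
Proof.
move=> PM; have uM := posdef_unitmx PM; case: PM => MT Mp; split.
  by rewrite trmx_inv MT.
move=> x x0; set y := invmx M *m x.
have xy : x = M *m y by rewrite /y mulKVmx.
have y0 : y != 0 by apply: contraNneq x0 => y0; rewrite xy y0 mulmx0.
clearbody y; have := Mp y y0; congr (_ < _).
by rewrite xy trmx_mul MT -!mulmxA mulKVmx.
Qed.

Lemma posdef_quad_ge0 n (S : 'M[R]_n) (x : 'cV[R]_n) :
  posdef S -> 0 <= (x^T *m S *m x) 0 0.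
Proof.
move=> [_ Sp]; have [->|x0] := eqVneq x 0; first by rewrite mulmx0 mxE.
exact: ltW (Sp x x0).
Qed.

Lemma mxtrace_congr_sum n (S D : 'M[R]_n) :
  \tr (D^T *m S *m D) = \sum_i ((col i D)^T *m S *m col i D) 0 0.
Proof.
apply: eq_bigr => i _; rewrite tr_col -row_mul !mxE.
by apply: eq_bigr => j _; rewrite !mxE.
Qed.

Lemma mxtrace_congr_ge0 n (S D : 'M[R]_n) : posdef S -> 0 <= \tr (D^T *m S *m D).
Proof.
by move=> PS; rewrite mxtrace_congr_sum; apply: sumr_ge0 => i _; apply: posdef_quad_ge0.
Qed.

Lemma mxtrace_congr_eq0 n (S D : 'M[R]_n) :
  posdef S -> \tr (D^T *m S *m D) = 0 -> D = 0.
Proof.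
move=> PS; rewrite mxtrace_congr_sum => /psumr_eq0P tr0.
have colD0 j : col j D = 0.
  apply: contra_eq (tr0 (fun i _ => posdef_quad_ge0 _ PS) j isT) => /(PS.2 _).
  by move/lt0r_neq0.
apply/matrixP => i j.
by have := congr1 (fun v : 'cV[R]_n => v i 0) (colD0 j); rewrite !mxE.
Qed.

Lemma posdef_sqr_inj n (P Q : 'M[R]_n) :
  posdef P -> posdef Q -> P *m P = Q *m Q -> P = Q.
Proof.
move=> PdP PdQ PQsqr; apply/eqP; rewrite -subr_eq0; apply/eqP.
set D := P - Q.
have DT : D^T = D by rewrite /D linearB /= PdP.1 PdQ.1.
have PD_DQ : P *m D + D *m Q = 0 by rewrite /D mulmxBr mulmxBl PQsqr addrA subrK subrr.
have tr_sum0 : \tr (D^T *m P *m D) + \tr (D^T *m Q *m D) = 0.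
  rewrite DT [\tr (D *m Q *m D)]mxtrace_mulC -mulmxA -raddfD /= -mulmxDr PD_DQ.
  by rewrite mulmx0 linear0.
move/eqP: tr_sum0; rewrite paddr_eq0 ?mxtrace_congr_ge0 // => /andP [/eqP trP0 _].
exact: mxtrace_congr_eq0 PdP trP0.
Qed.

Lemma riccati_posdef_uniq n g (X Y C : 'M[R]_n) : g * g = 1 ->
  posdef (X + g *: C) -> posdef Y ->
  riccati g X C = g *: (Y *m Y - X *m X) -> X + g *: C = Y.
Proof.
move=> gg PXC PY ric; apply: posdef_sqr_inj => //.
by rewrite riccati_sqr // ric scalerA gg scale1r addrC subrK.
Qed.

Lemma posdef_halfpow n (beta : R) (S : 'M[R]_n) : posdef S -> posdef (halfpow beta S).
Proof. by rewrite /halfpow; case: ifP => // _; apply: posdef_inv. Qed.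

Lemma halfpowN1 n (S : 'M[R]_n) : halfpow (-1) S = invmx S.
Proof. by rewrite /halfpow lt_eqF //; lra. Qed.

Lemma invmx_sqr_sub n k (A : 'M[R]_n) (Z : 'M[R]_(n, k)) (a : R) SA SB SK :
  a * a = 1 -> A^T = A ->
  is_psqrt A SA -> is_psqrt (A + a *: (Z *m Z^T)) SB ->
  is_psqrt (1%:M + a *: (Z^T *m invmx A *m Z)) SK ->
  let V := invmx A *m Z *m invmx SK in
  (a * -1) *: (invmx SB *m invmx SB - invmx SA *m invmx SA) = V *m V^T.
Proof.
move=> aa AT [PSA SA2] [PSB SB2] [PSK SK2] V.
have [uSA uSB uSK] := And3 (posdef_unitmx PSA) (posdef_unitmx PSB) (posdef_unitmx PSK).
have uA : A \in unitmx by rewrite -SA2 unitmx_mul uSA.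
have uK : 1%:M + a *: (Z^T *m invmx A *m Z) \in unitmx by rewrite -SK2 unitmx_mul uSK.
rewrite -!invmxM // SA2 SB2 woodbury // addrAC subrr add0r scalerN scalerA.
rewrite mulrN1 mulNr aa scaleN1r opprK -SK2 invmxM //.
by rewrite /V !trmx_mul !trmx_inv PSK.1 AT !mulmxA.
Qed.

Lemma halfpow_sqr_sub n k (A : 'M[R]_n) (Z : 'M[R]_(n, k)) (a b : R) SA SB SK :
  a * a = 1 -> (b = 1 \/ b = -1) -> A^T = A ->
  is_psqrt A SA -> is_psqrt (A + a *: (Z *m Z^T)) SB ->
  is_psqrt (1%:M + a *: (Z^T *m invmx A *m Z)) SK ->
  let V := if b == 1 then Z else invmx A *m Z *m invmx SK in
  (a * b) *: (halfpow b SB *m halfpow b SB - halfpow b SA *m halfpow b SA) = V *m V^T.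
Proof.
move=> aa [->|->] AT SA_sqrt SB_sqrt SK_sqrt V; rewrite /V.
  rewrite /halfpow eqxx mulr1 SA_sqrt.2 SB_sqrt.2 addrAC subrr add0r.
  by rewrite scalerA aa scale1r.
rewrite !halfpowN1 lt_eqF; last by lra.
exact: invmx_sqr_sub.
Qed.

End PositiveDefinite.

Theorem proposition8 (R : rcfType) (n k : nat)
    (A : 'M[R]_n) (Z : 'M[R]_(n, k)) (alpha beta : R)
    (SA SB : 'M[R]_n) (SK : 'M[R]_k) :
  (alpha = 1 \/ alpha = -1) ->
  (beta = 1 \/ beta = -1) ->
  A^T = A ->
  posdef A ->
  posdef (A + alpha *: (Z *m Z^T)) ->
  is_psqrt A SA ->
  is_psqrt (A + alpha *: (Z *m Z^T)) SB ->
  is_psqrt (1%:M + alpha *: (Z^T *m invmx A *m Z)) SK ->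
  let V := if beta == 1 then Z else invmx A *m Z *m invmx SK in
  let Ab := halfpow beta SA in
  let Bb := halfpow beta SB in
  (let C := (alpha * beta) *: (Bb - Ab) in
     Ab *m C + C *m Ab + (alpha * beta) *: (C *m C) = V *m V^T) /\
  (forall C : 'M[R]_n,
     posdef C ->
     posdef (Ab + (alpha * beta) *: C) ->
     Ab *m C + C *m Ab + (alpha * beta) *: (C *m C) = V *m V^T ->
     Ab + (alpha * beta) *: C = Bb).
Proof.
move=> alpha_sign beta_sign AT _ _ SA_sqrt SB_sqrt SK_sqrt V Ab Bb.
have aa : alpha * alpha = 1 by case: alpha_sign => ->; lra.
have gg : (alpha * beta) * (alpha * beta) = 1 by case: alpha_sign beta_sign => -> [] ->; lra.
have VVT : (alpha * beta) *: (Bb *m Bb - Ab *m Ab) = V *m V^T by apply: halfpow_sqr_sub.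
split=> [C | C _ PC ric]; first by rewrite -VVT -riccati_sub.
apply: riccati_posdef_uniq PC _ _ => //; first exact: posdef_halfpow SB_sqrt.1.
by rewrite VVT.
Qed.
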